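(* Let $n\geqslant 2$, let $m_1,\ldots,m_n$ be nonnegative integers, and let $A=(a_{ij})_{1\leqslant i,j\leqslant n}$ be a complex matrix. Let $P(x_1,\ldots,x_n)\in\mathbb{C}[x_1,\ldots,x_n]$ be homogeneous and suppose there is $\nu\in\{1,-1\}$ such that for all $1\leqslant i<j\leqslant n$, $$P(x_1,\ldots,x_{i-1},x_j,x_{i+1},\ldots,x_{j-1},x_i,x_{j+1},\ldots,x_n)=\nu P(x_1,\ldots,x_n).$$ Set $f(x_1,\ldots,x_n)=\|a_{ij}x_j^{m_i}\|_{1\leqslant i,j\leqslant n}\,P(x_1,\ldots,x_n)$. Then, as polynomials in $x$, $$f^*(x,\ldots,x)=P^*(x-m_1,\ldots,x-m_n)\prod_{i=1}^n (x)_{m_i}\times\begin{cases}\|A\| & \text{if } \nu=1,\\ \mathrm{per}(A) & \text{if } \nu=-1.\end{cases}$$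
   Context: $(x)_0=1$ and $(x)_r=x(x-1)\cdots(x-r+1)$ for positive integers $r$. For a polynomial $Q=\sum_{j_1,\ldots,j_n} c_{j_1,\ldots,j_n}x_1^{j_1}\cdots x_n^{j_n}\in\mathbb{C}[x_1,\ldots,x_n]$, $Q^*$ denotes the polynomial $\sum_{j_1,\ldots,j_n} c_{j_1,\ldots,j_n}(x_1)_{j_1}\cdots(x_n)_{j_n}$. For a matrix $B=(b_{ij})_{1\leqslant i,j\leqslant n}$, $\|B\|=\sum_{\sigma\in S_n}\varepsilon(\sigma)\prod_{i=1}^n b_{i,\sigma(i)}$ is its determinant and $\mathrm{per}(B)=\sum_{\sigma\in S_n}\prod_{i=1}^n b_{i,\sigma(i)}$ its permanent, where $S_n$ is the symmetric group on $\{1,\ldots,n\}$ and $\varepsilon(\sigma)$ is the sign of $\sigma$. *)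

From mathcomp Require Import all_boot all_algebra fingroup perm.
From mathcomp Require Import Rstruct.
From mathcomp Require Import complex.
From mathcomp Require Export mpoly.
Set Implicit Arguments. Unset Strict Implicit. Unset Printing Implicit Defensive.
Import GRing.Theory.
Local Open Scope ring_scope.

Definition C : numClosedFieldType := (Rdefinitions.R)[i].

Definition ffactr {R : ringType} (y : R) (r : nat) : R :=
  \prod_(k < r) (y - k%:R).

Definition mfstar {n : nat} {R : comRingType} (Q : {mpoly R[n]}) : {mpoly R[n]} :=
  \sum_(m <- msupp Q) Q@_m *: \prod_(i < n) ffactr ('X_i) (m i).

(* Evaluation of a multivariate polynomial at univariate polynomials
   (used to form Q(y_1,...,y_n) with y_i in C[x]). *)
Definition mevalp {n : nat} {R : comRingType} (Q : {mpoly R[n]})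
  (y : 'I_n -> {poly R}) : {poly R} := mmap (@polyC R) y Q.

Definition per {R : comRingType} {n : nat} (B : 'M[R]_n) : R :=
  \sum_(s : 'S_n) \prod_(i < n) B i (s i).

(* (X^b Q)^* evaluated at y is prod_i (y_i)_(b_i) * Q^*(y - b), because
   (x)_(b+c) = (x)_b (x-b)_c.  Expanding the determinant, the permutation s
   contributes sign(s) prod_i a_(i,s(i)) X^(m o s^-1) P; moving the
   permutation from the shifts m o s^-1 onto P via msym costs a factor nu^s,
   since P is nu-symmetric under transpositions.  The terms thus add up to
   sum_s sign(s) nu^s prod_i a_(i,s(i)), i.e. to det A or per A. *)
From HB Require Import structures.
From mathcomp Require Import all_boot all_algebra fingroup perm.
From mathcomp Require Import mpoly bigenough ssrcomplements ring.
Set Implicit Arguments.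
Unset Strict Implicit.
Unset Printing Implicit Defensive.
Import GRing.Theory Num.Theory.
Local Open Scope ring_scope.

Lemma ffactrD (R : nzRingType) (y : R) a b :
  ffactr y (a + b) = ffactr y a * ffactr (y - a%:R) b.
Proof.
rewrite /ffactr big_split_ord /=; congr (_ * _); apply: eq_bigr => k _.
by rewrite natrD opprD addrA.
Qed.

Section FallingFactorialTransform.
Import BigEnough.
Variables (n : nat) (R : comNzRingType).
Implicit Types (p q : {mpoly R[n]}) (y : 'I_n -> {poly R}).

Lemma mfstarE k p : (msize p <= k)%N ->
  mfstar p = \sum_(m : 'X_{1..n < k}) p@_m *: \prod_(i < n) ffactr 'X_i (m i).
Proof.
move=> le_pk; set I : subFinType _ := 'X_{1..n < k}.
rewrite /mfstar (big_mksub I) ?msupp_uniq //=; first last.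
  by move=> x /msize_mdeg_lt /leq_trans; apply.
by rewrite big_rmcond //= => j /memN_msupp_eq0 ->; rewrite scale0r.
Qed.

Lemma mfstar_is_linear : linear (@mfstar n R).
Proof.
move=> c p q; pose_big_enough k.
  rewrite !(mfstarE (k := k)) // scaler_sumr -big_split /=.
  apply/eq_bigr => m _.
  by rewrite mcoeffD mcoeffZ scalerDl scalerA.
by close.
Qed.

HB.instance Definition _ :=
  GRing.isLinear.Build R {mpoly R[n]} {mpoly R[n]} _ (@mfstar n R)
    mfstar_is_linear.

Lemma mevalp_mfstarX m y :
  mevalp (mfstar 'X_[m]) y = \prod_(i < n) ffactr (y i) (m i).
Proof.
rewrite /mfstar msuppX big_seq1 mcoeffX eqxx scale1r /mevalp rmorph_prod.
apply: eq_bigr => i _; rewrite rmorph_prod; apply: eq_bigr => j _.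
by rewrite rmorphB /= rmorph_nat mmapX mmap1U.
Qed.

Lemma eq_mevalp p y1 y2 : y1 =1 y2 -> mevalp p y1 = mevalp p y2.
Proof. by move=> eq_y; apply: eq_bigr => k _; rewrite (mmap1_eq _ eq_y). Qed.

Lemma mevalp_mfstarZ c p y :
  mevalp (mfstar (c *: p)) y = c%:P * mevalp (mfstar p) y.
Proof. by rewrite linearZ /mevalp mmapZ. Qed.

Lemma mevalp_mfstarD p q y :
  mevalp (mfstar (p + q)) y = mevalp (mfstar p) y + mevalp (mfstar q) y.
Proof. by rewrite linearD /mevalp mmapD. Qed.

Lemma mevalp_mfstar_sum (I : Type) (r : seq I) (P : pred I) F y :
  mevalp (mfstar (\sum_(i <- r | P i) F i)) y =
  \sum_(i <- r | P i) mevalp (mfstar (F i)) y.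
Proof. by rewrite linear_sum /mevalp raddf_sum. Qed.

Lemma mevalp_mfstar_msym (s : 'S_n) p y :
  mevalp (mfstar (msym s p)) y = mevalp (mfstar p) (y \o s).
Proof.
elim/mpolyind: p => [|c m p _ _ IHp].
  by rewrite msym0 linear0 /mevalp !mmap0.
rewrite msymD msymZ msymX !mevalp_mfstarD !mevalp_mfstarZ IHp !mevalp_mfstarX.
congr (_ * _ + _); rewrite (reindex_inj (@perm_inj _ s)) /=.
by apply: eq_bigr => i _; rewrite mnmE permK.
Qed.

Lemma mevalp_mfstar_mulX (b : 'X_{1..n}) p y :
  mevalp (mfstar ('X_[b] * p)) y =
  \prod_(i < n) ffactr (y i) (b i) *
  mevalp (mfstar p) (fun i => y i - (b i)%:R%:P).
Proof.
elim/mpolyind: p => [|c m p _ _ IHp].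
  by rewrite mulr0 linear0 /mevalp !mmap0 mulr0.
rewrite mulrDr -scalerAr -mpolyXD !mevalp_mfstarD !mevalp_mfstarZ IHp.
rewrite !mevalp_mfstarX mulrDr mulrCA -big_split /=; congr (_ * _ + _).
by apply: eq_bigr => i _; rewrite mnmDE ffactrD polyC_natr.
Qed.

End FallingFactorialTransform.

Lemma msym_tperm_sign (n : nat) (R : nzRingType) (nu : R) (P : {mpoly R[n]}) :
  nu ^+ 2 = 1 ->
  (forall i j : 'I_n, (i < j)%N -> msym (tperm i j) P = nu *: P) ->
  forall s : 'S_n, msym s P = nu ^+ s *: P.
Proof.
move=> nu2 symP s.
have symP' (i j : 'I_n) : i != j -> msym (tperm i j) P = nu *: P.
  case: (ltngtP i j) => [/symP //|/symP|/val_inj->]; last by rewrite eqxx.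
  by rewrite tpermC.
have [ts -> dts] := prod_tpermP s; rewrite odd_perm_prod // -modn2 expr_mod //.
elim: ts dts => [|[i j] ts IHts] /=; first by rewrite big_nil msym1m scale1r.
case/andP=> /= /symP' Pij dts.
by rewrite big_cons msymMm /= Pij msymZ IHts // scalerA -exprS.
Qed.

Lemma prod_mpolyX_perm (n : nat) (R : nzRingType) (s : 'S_n) (m : 'I_n -> nat) :
  \prod_(i < n) ('X_(s i) : {mpoly R[n]}) ^+ m i =
  'X_[[multinom m ((s^-1)%g j) | j < n]].
Proof. by rewrite (mpolyXE _ s); apply: eq_bigr => i _; rewrite mnmE permK. Qed.

Section DeterminantExpansion.
Variables (n : nat) (R : comNzRingType) (A : 'M[R]_n) (m : 'I_n -> nat).

Definition mpolyX_matrix : 'M[{mpoly R[n]}]_n :=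
  \matrix_(i < n, j < n) ((A i j)%:MP * 'X_j ^+ m i).

Lemma det_mpolyX_matrix : \det mpolyX_matrix =
  \sum_(s : 'S_n) ((-1) ^+ s * \prod_(i < n) A i (s i)) *:
                   'X_[[multinom m ((s^-1)%g j) | j < n]].
Proof.
apply: eq_bigr => s _; rewrite -prod_mpolyX_perm.
rewrite (eq_bigr (fun i => (A i (s i))%:MP * 'X_(s i) ^+ m i)); last first.
  by move=> i _; rewrite mxE.
rewrite big_split /= -rmorph_prod -mul_mpolyC rmorphM /=.
by rewrite rmorphXn rmorphN1 mulrA.
Qed.

Lemma mevalp_mfstar_det_mul (t : {poly R}) (nu : R) (P : {mpoly R[n]}) :
  (forall s : 'S_n, msym s P = nu ^+ s *: P) ->
  mevalp (mfstar (\det mpolyX_matrix * P)) (fun _ => t) =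
  mevalp (mfstar P) (fun i => t - (m i)%:R%:P) * \prod_(i < n) ffactr t (m i) *
  (\sum_(s : 'S_n) (-1) ^+ s * nu ^+ s * \prod_(i < n) A i (s i))%:P.
Proof.
move=> symP; rewrite det_mpolyX_matrix mulr_suml mevalp_mfstar_sum rmorph_sum.
rewrite mulr_sumr; apply: eq_bigr => s _.
rewrite -scalerAl mevalp_mfstarZ mevalp_mfstar_mulX.
have -> : \prod_(i < n) ffactr t ([multinom m ((s^-1)%g j) | j < n] i) =
          \prod_(i < n) ffactr t (m i).
  rewrite (reindex_inj (@perm_inj _ s)) /=.
  by apply: eq_bigr => i _; rewrite mnmE permK.
have -> : mevalp (mfstar P)
    (fun i => t - ([multinom m ((s^-1)%g j) | j < n] i)%:R%:P) =
    (nu ^+ s)%:P * mevalp (mfstar P) (fun i => t - (m i)%:R%:P).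
  rewrite -odd_permV -mevalp_mfstarZ -symP mevalp_mfstar_msym.
  by apply: eq_mevalp => i; rewrite mnmE.
rewrite !rmorphM /=.
move: (mevalp _ _) (\prod_(i < n) ffactr t (m i)) => G F.
move: ((-1) ^+ s)%:P (nu ^+ s)%:P (\prod_(i < n) A i (s i))%:P => a b c.
ring.
Qed.

End DeterminantExpansion.

Theorem theorem2p1 (n : nat) (hn : (2 <= n)%N) (m : 'I_n -> nat)
  (A : 'M[C]_n) (P : {mpoly C[n]}) (nu : C) :
  (exists d : nat, P \is d.-homog) ->
  (nu = 1 \/ nu = -1) ->
  (forall i j : 'I_n, (i < j)%N -> msym (tperm i j) P = nu *: P) ->
  let f : {mpoly C[n]} :=
    \det (\matrix_(i < n, j < n) ((A i j)%:MP * 'X_j ^+ m i)) * P in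
  mevalp (mfstar f) (fun _ => 'X) =
    mevalp (mfstar P) (fun i => 'X - ((m i)%:R)%:P)
    * (\prod_(i < n) ffactr ('X : {poly C}) (m i))
    * (if nu == 1 then \det A else per A)%:P.
Proof.
move=> _ nu_sign symP f.
have nu2 : nu ^+ 2 = 1 by case: (nu_sign) => ->; rewrite ?sqrrN expr1n.
rewrite /f (mevalp_mfstar_det_mul A m 'X (msym_tperm_sign nu2 symP)).
congr (_ * _%:P); case: nu_sign => ->.
  by rewrite eqxx; apply: eq_bigr => s _; rewrite expr1n mulr1.
have -> : (-1 == 1 :> C) = false.
  by apply/negbTE; rewrite eq_sym -addr_eq0 (pnatr_eq0 C 2).
by apply: eq_bigr => s _; rewrite -signr_addb addbb mul1r.
Qed.
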